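(* For all $t_1, t_2 \in \mathcal{L}_s$, $t_1 =_{\mathcal{L}} t_2$ if and only if $t_1 = t_2$ (syntactic equality, i.e. same symbol and same arguments).
   Context: $\mathcal{X}$ is a countable set of variables; a valuation is $\sigma\colon\mathcal{X}\to\mathbb{N}$. For finite $E\subseteq\mathcal{X}$, $x\in\mathcal{X}$, $S\in\mathbb{N}$, the sublevels $A(E,x,S)$ and $B(E,S)$ have values $[A(E,x,S)]_\sigma = 0$ if some $y\in E$ has $\sigma(y)=0$, and $\sigma(x)+S$ otherwise; $[B(E,S)]_\sigma=0$ if some $y\in E$ has $\sigma(y)=0$, and $S$ otherwise. $\mathcal{L}_s$ is the set of sublevels $A(E,x,S)$ with $x \in E$ and $B(E,S)$ with $S>0$. $t_1 =_{\mathcal{L}} t_2$ means $[t_1]_\sigma = [t_2]_\sigma$ for every valuation $\sigma$. *)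

From mathcomp Require Import all_boot.
From mathcomp Require Import finmap.
Set Implicit Arguments. Unset Strict Implicit. Unset Printing Implicit Defensive.

(* Finite sets E are
   represented by [{fset X}], so syntactic equality of terms compares
   E as a set. *)
Inductive sublevel (X : countType) : Type :=
| SA of {fset X} & X & nat
| SB of {fset X} & nat.

Definition sl_eval (X : countType) (sigma : X -> nat) (t : sublevel X) : nat :=
  match t with
  | SA E x s => if [exists y : E, sigma (val y) == 0] then 0 else sigma x + s
  | SB E s => if [exists y : E, sigma (val y) == 0] then 0 else s
  end.

Definition in_Ls (X : countType) (t : sublevel X) : Prop :=
  match t with
  | SA E x s => x \in E
  | SB _ s => 0 < s
  end.

Definition sl_equiv (X : countType) (t1 t2 : sublevel X) : Prop :=
  forall sigma : X -> nat, sl_eval sigma t1 = sl_eval sigma t2.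

(** Evaluating a term of L_s at the indicator valuation of its own variable
    set gives a positive value, whereas any valuation vanishing somewhere on
    the variable set of the other term sends that term to 0; hence equivalent
    terms have the same variable set.  On valuations that are positive
    everywhere, the guards disappear and A(E,x,S), B(E,S) become the affine
    functions sigma(x) + S and S, which the constant valuations 1 and 2 and a
    valuation that is larger at x than elsewhere tell apart. *)
From mathcomp Require Import all_boot.
From mathcomp Require Import finmap.
Open Scope fset_scope.

Section Sublevels.
Variable X : countType.
Implicit Types (t : sublevel X) (sigma : X -> nat) (E : {fset X}).

Definition sl_dom t : {fset X} := match t with SA E _ _ | SB E _ => E end.

Definition sl_body sigma t : nat :=
  match t with SA _ x s => sigma x + s | SB _ s => s end.

Lemma sl_evalE sigma t :
  sl_eval sigma t =
  if [exists y : sl_dom t, sigma (val y) == 0] then 0 else sl_body sigma t.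
Proof. by case: t. Qed.

Lemma exists_fset_eq0P sigma E :
  reflect (exists2 y, y \in E & sigma y = 0) [exists y : E, sigma (val y) == 0].
Proof.
apply: (iffP existsP) => [[y /eqP y0] | [y yE y0]].
  by exists (val y) => //; apply: valP.
by exists [` yE]; rewrite /= y0.
Qed.

Lemma sl_eval_gt0 sigma t :
  in_Ls t -> {in sl_dom t, forall y, 0 < sigma y} -> 0 < sl_eval sigma t.
Proof.
move=> Lt pos; rewrite sl_evalE.
case: exists_fset_eq0P => [[y /pos + y0] | _]; first by rewrite y0.
by case: t Lt pos => [E x s | E s] //= xE pos; rewrite ltn_addr ?pos.
Qed.

Lemma sl_eval_pos sigma t :
  (forall z, 0 < sigma z) -> sl_eval sigma t = sl_body sigma t.
Proof.
move=> pos; rewrite sl_evalE.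
by case: exists_fset_eq0P => // -[y _ y0]; move: (pos y); rewrite y0.
Qed.

Lemma sl_equiv_dom_sub t1 t2 :
  in_Ls t1 -> sl_equiv t1 t2 -> sl_dom t2 `<=` sl_dom t1.
Proof.
move=> Lt1 eqv; pose sigma z : nat := z \in sl_dom t1.
have /(sl_eval_gt0 sigma t1 Lt1) : {in sl_dom t1, forall y, 0 < sigma y}.
  by move=> y; rewrite /sigma => ->.
rewrite eqv sl_evalE; case: exists_fset_eq0P => // nz _.
apply/fsubsetP => y yt2; apply/negPn/negP => yNt1.
by apply: nz; exists y => //; rewrite /sigma (negbTE yNt1).
Qed.

Lemma sl_eq_dom_body t1 t2 :
  sl_dom t1 = sl_dom t2 ->
  (forall sigma, (forall z, 0 < sigma z) -> sl_body sigma t1 = sl_body sigma t2) ->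
  t1 = t2.
Proof.
move=> eqE eqB; have /= := eqB (fun=> 1) (fun=> isT).
have /= := eqB (fun=> 2) (fun=> isT).
case: t1 t2 eqE eqB => [E x s | E s] [F y u | F u] //= -> eqB.
- move=> _ /eqP; rewrite eqn_add2l => /eqP us; subst u.
  have /= /eqP := eqB (fun z => (z == x).+2) (fun=> isT).
  by rewrite eqxx eqn_add2r; case: (y =P x) => [->|].
- by move=> <- /eqP; rewrite eqn_add2r.
- by move=> -> /eqP; rewrite eqn_add2r.
- by move=> _ ->.
Qed.

End Sublevels.

Theorem corollary30 (X : countType) (t1 t2 : sublevel X) :
  in_Ls t1 -> in_Ls t2 -> (sl_equiv t1 t2 <-> t1 = t2).
Proof.
move=> Lt1 Lt2; split => [eqv | -> //].
have vqe : sl_equiv t2 t1 by move=> sigma; rewrite eqv.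
apply: sl_eq_dom_body.
  by apply/eqP; rewrite eqEfsubset !sl_equiv_dom_sub.
by move=> sigma pos; rewrite -!sl_eval_pos.
Qed.
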